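(* Let $k\ge 6$ and let $H$ be the complement of $P_k$ or of $C_k$. Then $\eta(H)=\lfloor (k+\omega(H))/2\rfloor$, where $\omega(H)$ is the size of a maximum clique of $H$. Explicitly, writing $k=4t+r$ with $r\in\{0,1,2,3\}$: $\eta(\bar C_k)=3t,3t,3t+1,3t+2$ and $\eta(\bar P_k)=3t,3t+1,3t+1,3t+2$ for $r=0,1,2,3$ respectively.
   Context: $\bar F$ is the complement of $F$; $P_k$, $C_k$ are the path and cycle on $k$ vertices. A $K_t$-minor function of $H$ is a map $f:V(H)\to\{1,\dots,t\}$ (defined on all vertices) such that each preimage $f^{-1}(i)$ induces a connected subgraph of $H$ and for all $i\ne j$ there is at least one edge between $f^{-1}(i)$ and $f^{-1}(j)$; $\eta(H)$ is the largest $t$ for which such a function exists. *)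

From mathcomp Require Import all_boot.
Set Implicit Arguments. Unset Strict Implicit. Unset Printing Implicit Defensive.

Definition path_rel (k : nat) : rel 'I_k :=
  fun i j => (i.+1 == j :> nat) || (j.+1 == i :> nat).

Definition cycle_rel (k : nat) : rel 'I_k :=
  fun i j => path_rel i j ||
             ((i == 0 :> nat) && (j == k.-1 :> nat)) ||
             ((j == 0 :> nat) && (i == k.-1 :> nat)).

Arguments path_rel k : clear implicits.
Arguments cycle_rel k : clear implicits.

Definition compl_rel (V : finType) (e : rel V) : rel V :=
  fun x y => (x != y) && ~~ e x y.

Definition induced_connected (V : finType) (e : rel V) (S : {set V}) : bool :=
  (S != set0) &&
  [forall x in S, forall y in S,
     connect (fun u v => [&& e u v, u \in S & v \in S]) x y].

(* K_t-minor function f : V -> {1..t} (here encoded as 'I_t = {0..t-1}). *)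
Definition minor_fun (V : finType) (e : rel V) (t : nat) (f : V -> 'I_t) : bool :=
  [forall i : 'I_t, induced_connected e [set x | f x == i]] &&
  [forall i : 'I_t, forall j : 'I_t,
     (i != j) ==> [exists x, exists y, [&& f x == i, f y == j & e x y]]].

Definition has_Kt_minor_fun (V : finType) (e : rel V) (t : nat) : bool :=
  [exists f : {ffun V -> 'I_t}, minor_fun e f].

(* eta(H): the largest t admitting a K_t-minor function (t <= |V| necessarily
   when t >= 1, since preimages are nonempty). *)
Definition eta (V : finType) (e : rel V) : nat :=
  \max_(t < #|V|.+1 | has_Kt_minor_fun e t) t.

Definition is_clique (V : finType) (e : rel V) (S : {set V}) : bool :=
  [forall x in S, forall y in S, (x != y) ==> e x y].

Definition omega (V : finType) (e : rel V) : nat :=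
  \max_(S : {set V} | is_clique e S) #|S|.

From mathcomp Require Import all_boot zify.

(** In a K_t-minor function every fiber is nonempty, and the vertices lying in
    singleton fibers are pairwise adjacent, so they form a clique; counting
    gives 2t <= |V| + omega, i.e. eta <= (|V| + omega)/2.  Cliques of the
    complements of P_k and C_k are independent sets of P_k and C_k, of size at
    most ceil(k/2) and floor(k/2).

    Conversely, write k = s + 2p with p >= 2 and take the s singleton fibers
    {0}, {2}, ..., {2s-2} and p fibers {v_m, v_(m+p)}, m < p, where
    v_0 < v_1 < ... enumerates the remaining vertices.  The singletons are
    pairwise non-adjacent in P_k (also in C_k when s <= 2p), the two vertices
    of a pair are at distance at least p >= 2, and two pairs can never be
    completely joined in C_k because C_k has no 4-cycle.  So the complement
    has a K_(s+p) minor, and s + p = k - p meets the upper bound for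
    p = floor((k+2)/4) (path) and p = floor((k+3)/4) (cycle). *)

Set Implicit Arguments.
Unset Strict Implicit.
Unset Printing Implicit Defensive.

Lemma minor_fun_card_bound (V : finType) (e : rel V) t (f : V -> 'I_t) :
  minor_fun e f -> t.*2 <= #|V| + omega e.
Proof.
case/andP => /forallP fibers_conn /forallP fibers_joined.
pose B i := [set x | f x == i].
have B_gt0 i : 0 < #|B i| by have /andP[] := fibers_conn i; rewrite card_gt0.
pose S := [set x | #|B (f x)| == 1].
have S_fiber x y : x \in S -> f y = f x -> y = x.
  rewrite inE => /cards1P[z Bz] fyx.
  have: x \in B (f x) by rewrite inE.
  have: y \in B (f x) by rewrite inE fyx.
  by rewrite Bz !inE => /eqP-> /eqP->.
have S_clique : is_clique e S.
  apply/forall_inP => x Sx; apply/forall_inP => y Sy; apply/implyP => xy.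
  have fxy : f x != f y by apply: contraNneq xy => /esym/S_fiber->.
  have /existsP[x' /existsP[y' /and3P[/eqP fx' /eqP fy' e_xy]]] :=
    implyP (forallP (fibers_joined (f x)) (f y)) fxy.
  by rewrite -(S_fiber x x') // -(S_fiber y y').
have card_fibers (P : pred 'I_t) : #|[set x | P (f x)]| = \sum_(i | P i) #|B i|.
  rewrite -sum1_card (partition_big f P) => [|x]; last by rewrite inE.
  apply: eq_bigr => i Pi; rewrite -sum1_card; apply: eq_bigl => x.
  by rewrite !inE; case: eqVneq => [->|]; rewrite ?Pi ?andbF.
have card_V : #|V| = \sum_(i < t) #|B i|.
  by rewrite -(card_fibers predT) -cardsT; apply: eq_card => x; rewrite !inE.
have card_S : #|S| = \sum_(i < t | #|B i| == 1) 1.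
  by rewrite (card_fibers (fun i => #|B i| == 1)); apply: eq_bigr => i /eqP.
have : t.*2 <= #|V| + #|S|.
  rewrite card_V card_S [X in _ + X]big_mkcond -big_split /=.
  rewrite -[t in t.*2]card_ord -sum1_card -muln2 big_distrl /=.
  apply: leq_sum => i _; have := B_gt0 i.
  by case: ifP => /=; lia.
have : #|S| <= omega e by apply: leq_bigmax_cond.
lia.
Qed.

Lemma eta_leq (V : finType) (e : rel V) : eta e <= (#|V| + omega e)./2.
Proof.
by apply/bigmax_leqP => t /existsP[f /minor_fun_card_bound]; lia.
Qed.

Lemma leq_eta (V : finType) (e : rel V) t :
  t <= #|V| -> has_Kt_minor_fun e t -> t <= eta e.
Proof.
rewrite -ltnS => t_lt; exact: (@leq_bigmax_cond _ _ val (Ordinal t_lt)).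
Qed.

Lemma omega_compl_path_le k : omega (compl_rel (path_rel k)) <= k.+1./2.
Proof.
apply/bigmax_leqP => S S_clique.
have half_lt (x : 'I_k) : x./2 < k.+1./2 by have := ltn_ord x; lia.
rewrite -(card_in_imset (f := fun x => Ordinal (half_lt x))).
  by rewrite -[leqRHS]card_ord max_card.
move=> x y xS yS [half_xy]; apply/eqP/negPn/negP => xy.
have := implyP (forall_inP (forall_inP S_clique x xS) y yS) xy.
move: xy; rewrite /compl_rel -val_eqE /path_rel /=; lia.
Qed.

Lemma omega_compl_cycle_le k : 3 <= k -> omega (compl_rel (cycle_rel k)) <= k./2.
Proof.
move=> k_ge3; apply/bigmax_leqP => S S_clique.
have S_shift_disj : S :&: (@ordS k @: S) = set0.
  apply/setP => y; rewrite !inE; apply/negbTE/andP => -[yS /imsetP[x xS y_eq]].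
  have := implyP (forall_inP (forall_inP S_clique x xS) y yS).
  rewrite y_eq /compl_rel /cycle_rel /path_rel -!val_eqE /=.
  have := ltn_ord x; case: (ltngtP x.+1 k) => // [x_lt | x_eq] _.
    by rewrite modn_small //; lia.
  by rewrite x_eq modnn; lia.
have := cardsUI S (@ordS k @: S).
rewrite S_shift_disj cards0 addn0 card_imset; last exact: ordS_inj.
have := max_card (S :|: @ordS k @: S); rewrite card_ord; lia.
Qed.

Lemma minor_fun_of_clique_fibers (V : finType) (e : rel V) t (f : V -> 'I_t) :
  (forall i, exists x, f x = i) ->
  (forall x y, f x = f y -> x != y -> e x y) ->
  (forall i j, i != j -> exists x y, [/\ f x = i, f y = j & e x y]) ->
  minor_fun e f.
Proof.
move=> f_surj fiber_clique fibers_joined; apply/andP; split.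
  apply/forallP => i; apply/andP; split.
    by have [x fx] := f_surj i; apply/set0Pn; exists x; rewrite inE fx.
  apply/forall_inP => x; rewrite inE => /eqP fx.
  apply/forall_inP => y; rewrite inE => /eqP fy.
  have [-> | xy] := eqVneq x y; first exact: connect0.
  by apply: connect1; rewrite !inE fx fy eqxx fiber_clique ?fx ?fy.
apply/forallP => i; apply/forallP => j; apply/implyP => ij.
have [x [y [fx fy exy]]] := fibers_joined i j ij.
by apply/existsP; exists x; apply/existsP; exists y; rewrite fx fy exy !eqxx.
Qed.

Lemma has_Kt_minor_fun_of_pairs (V : finType) (e : rel V) t (a b : 'I_t -> V) :
  symmetric e -> 0 < t ->
  (forall x, exists i, x \in [:: a i; b i]) ->
  (forall i j x, x \in [:: a i; b i] -> x \in [:: a j; b j] -> i = j) ->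
  (forall i, a i != b i -> e (a i) (b i)) ->
  (forall i j, i != j ->
     [|| e (a i) (a j), e (a i) (b j), e (b i) (a j) | e (b i) (b j)]) ->
  has_Kt_minor_fun e t.
Proof.
case: t a b => // t a b e_sym _ cover disj pair_edge pairs_joined.
pose f := [ffun x => odflt ord0 [pick i | x \in [:: a i; b i]]].
have f_mem x : x \in [:: a (f x); b (f x)].
  rewrite ffunE; case: pickP => //= none.
  by have [i] := cover x; rewrite [_ \in _]none.
have fE i x : x \in [:: a i; b i] -> f x = i by move/(disj _ _ _ (f_mem x)).
apply/existsP; exists f; apply: minor_fun_of_clique_fibers.
- by move=> i; exists (a i); rewrite (fE i) ?mem_head.
- move=> x y fxy; have := f_mem y; have := f_mem x; rewrite -fxy.
  move: (f x) => i; rewrite !inE.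
  case/orP=> /eqP-> /orP[]/eqP->; rewrite ?eqxx // => ab.
  + exact: pair_edge.
  + by rewrite e_sym pair_edge // eq_sym.
- move=> i j /pairs_joined.
  have memA i' : a i' \in [:: a i'; b i'] by rewrite mem_head.
  have memB i' : b i' \in [:: a i'; b i'] by rewrite !inE eqxx orbT.
  by case/or4P=> ?; [exists (a i), (a j) | exists (a i), (b j)
                   | exists (b i), (a j) | exists (b i), (b j)];
    rewrite (fE i) ?(fE j).
Qed.

Lemma compl_has_Kt_minor_fun_of_nat_pairs k t (e : rel 'I_k) (adj : rel nat)
    (a b : nat -> nat) :
  (forall x y : 'I_k, e x y = adj x y) -> symmetric adj -> 0 < t ->
  (forall i, i < t -> a i < k /\ b i < k) ->
  (forall x, x < k -> exists2 i, i < t & x \in [:: a i; b i]) ->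
  (forall i j x, i < t -> j < t ->
     x \in [:: a i; b i] -> x \in [:: a j; b j] -> i = j) ->
  (forall i, i < t -> ~~ adj (a i) (b i)) ->
  (forall i j, i < t -> j < t -> i != j ->
     ~~ [&& adj (a i) (a j), adj (a i) (b j),
            adj (b i) (a j) & adj (b i) (b j)]) ->
  has_Kt_minor_fun (compl_rel e) t.
Proof.
move=> eE adj_sym t_gt0 ab_lt cover disj pair_nonadj pairs_nonadj.
pose a' (i : 'I_t) : 'I_k := Ordinal (proj1 (ab_lt i (ltn_ord i))).
pose b' (i : 'I_t) : 'I_k := Ordinal (proj2 (ab_lt i (ltn_ord i))).
have memE i (x : 'I_k) : (x \in [:: a' i; b' i]) = (val x \in [:: a i; b i]).
  by rewrite !inE -!val_eqE.
have disj' i j x : x \in [:: a' i; b' i] -> x \in [:: a' j; b' j] -> i = j.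
  rewrite !memE => xi xj; apply: val_inj.
  exact: (disj _ _ _ (ltn_ord i) (ltn_ord j) xi xj).
have cross_neq i j x y : i != j ->
    x \in [:: a' i; b' i] -> y \in [:: a' j; b' j] -> x != y.
  move=> ij xi yj; apply: contraNneq ij => xy.
  by apply/eqP/(disj' _ _ x) => //; rewrite xy.
apply: (@has_Kt_minor_fun_of_pairs _ _ _ a' b') => //.
- by move=> x y; rewrite /compl_rel eq_sym !eE adj_sym.
- move=> x; have [i i_lt] := cover x (ltn_ord x).
  by exists (Ordinal i_lt); rewrite memE.
- by move=> i ab; rewrite /compl_rel ab eE pair_nonadj.
move=> i j ij; have := pairs_nonadj i j (ltn_ord i) (ltn_ord j) ij.
have mem_b i' : b' i' \in [:: a' i'; b' i'] by rewrite !inE eqxx orbT.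
by rewrite /compl_rel !eE !(cross_neq i j) ?mem_head ?mem_b //= !negb_and.
Qed.

(* [path_rel k x y] and [cycle_rel k x y] are convertible to
   [path_adj x y] and [cycle_adj k x y]. *)
Definition path_adj : rel nat := fun x y => (x.+1 == y) || (y.+1 == x).

Definition cycle_adj (k : nat) : rel nat := fun x y =>
  path_adj x y || ((x == 0) && (y == k.-1)) || ((y == 0) && (x == k.-1)).

Lemma path_adj_sym : symmetric path_adj.
Proof. by move=> x y; rewrite /path_adj orbC. Qed.

Lemma cycle_adj_sym k : symmetric (cycle_adj k).
Proof. by move=> x y; rewrite /cycle_adj path_adj_sym orbAC. Qed.

Lemma cycle_adj_C4_free k u w v1 v2 :
  5 <= k -> u < k -> w < k -> v1 < k -> v2 < k -> u != w -> v1 != v2 ->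
  ~~ [&& cycle_adj k u v1, cycle_adj k u v2, cycle_adj k w v1 & cycle_adj k w v2].
Proof. rewrite /cycle_adj /path_adj; lia. Qed.

(* The [m]-th vertex, in increasing order, outside {0, 2, ..., 2s-2}. *)
Definition free_vertex (s m : nat) := m.+1 + minn m s.-1.

Definition bag_fst (s i : nat) := if i < s then 2 * i else free_vertex s (i - s).

Definition bag_snd (s p i : nat) :=
  if i < s then 2 * i else free_vertex s (i - s + p).

Section PairBags.

Variables s p : nat.
Hypotheses (s_gt0 : 0 < s) (s_le : s <= 2 * p + 1) (p_ge2 : 2 <= p).

Local Notation k := (s + 2 * p).
Local Notation a := (bag_fst s).
Local Notation b := (bag_snd s p).

Lemma bag_lt i : i < s + p -> a i < k /\ b i < k.
Proof. by rewrite /bag_fst /bag_snd /free_vertex; case: ifP; lia. Qed.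

Lemma bags_cover x : x < k -> exists2 i, i < s + p & x \in [:: a i; b i].
Proof.
move=> x_lt; rewrite /bag_fst /bag_snd.
have [x_even | x_free] := boolP (~~ odd x && (x < 2 * s)).
  exists x./2; first lia.
  by rewrite ifT ?inE; [apply/orP; left; apply/eqP | ]; lia.
pose m := if x < 2 * s then x./2 else x - s.
have x_eq : free_vertex s m = x by rewrite /free_vertex /m; case: ifP; lia.
have [m_lt | m_ge] := ltnP m p.
  by exists (s + m); [lia | rewrite ifF ?addKn ?x_eq ?mem_head //; lia].
exists (s + m - p); first by rewrite /m; case: ifP; lia.
have -> : (s + m - p < s) = false by lia.
have -> : s + m - p - s + p = m by lia.
by rewrite x_eq !inE eqxx orbT.
Qed.

Lemma bags_disjoint i j x : i < s + p -> j < s + p ->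
  x \in [:: a i; b i] -> x \in [:: a j; b j] -> i = j.
Proof.
rewrite !inE /bag_fst /bag_snd /free_vertex.
by case: ifP; case: ifP; lia.
Qed.

Lemma bag_not_cycle_adj i : i < s + p -> ~~ cycle_adj k (a i) (b i).
Proof.
by rewrite /bag_fst /bag_snd /free_vertex /cycle_adj /path_adj; case: ifP; lia.
Qed.

Lemma bag_not_path_adj i : i < s + p -> ~~ path_adj (a i) (b i).
Proof.
move/bag_not_cycle_adj; apply: contra => ab_adj.
by rewrite /cycle_adj ab_adj.
Qed.

Lemma bags_not_path_complete i j : i < s + p -> j < s + p -> i != j ->
  ~~ [&& path_adj (a i) (a j), path_adj (a i) (b j), path_adj (b i) (a j)
       & path_adj (b i) (b j)].
Proof.
rewrite /bag_fst /bag_snd /free_vertex /path_adj.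
by case: ifP; case: ifP; lia.
Qed.

Lemma bag_single i : i < s -> a i = 2 * i /\ b i = 2 * i.
Proof. by rewrite /bag_fst /bag_snd => ->. Qed.

Lemma bag_pair i : s <= i ->
  a i = free_vertex s (i - s) /\ b i = free_vertex s (i - s + p).
Proof. by rewrite /bag_fst /bag_snd ltnNge => ->. Qed.

Lemma bags_not_cycle_complete i j : s <= 2 * p ->
  i < s + p -> j < s + p -> i != j ->
  ~~ [&& cycle_adj k (a i) (a j), cycle_adj k (a i) (b j),
         cycle_adj k (b i) (a j) & cycle_adj k (b i) (b j)].
Proof.
move=> s_le' i_lt j_lt ij.
have [/bag_lt[ai_lt bi_lt] /bag_lt[aj_lt bj_lt]] := conj i_lt j_lt.
have [/[dup] i_single /bag_single[-> ->] | /bag_pair[ai_eq bi_eq]] := ltnP i s;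
have [/[dup] j_single /bag_single[-> ->] | /bag_pair[aj_eq bj_eq]] := ltnP j s.
- by rewrite /cycle_adj /path_adj; lia.
- apply/negP => /and4P[adj_a adj_b _ _]; move: adj_a adj_b.
  by rewrite aj_eq bj_eq /free_vertex /cycle_adj /path_adj; lia.
- apply/negP => /and4P[adj_a _ adj_b _]; move: adj_a adj_b.
  by rewrite ai_eq bi_eq /free_vertex /cycle_adj /path_adj; lia.
apply: cycle_adj_C4_free => //; first lia.
  by rewrite ai_eq bi_eq /free_vertex; lia.
by rewrite aj_eq bj_eq /free_vertex; lia.
Qed.

End PairBags.

Lemma eta_compl_path_ge k p : 2 <= p -> 2 * p < k -> k <= 4 * p + 1 ->
  k - p <= eta (compl_rel (path_rel k)).
Proof.
move=> p_ge2 pk kp.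
have [s k_eq] : exists s, k = s + 2 * p by exists (k - 2 * p); lia.
subst k; have -> : s + 2 * p - p = s + p by lia.
have s_gt0 : 0 < s by lia.
have s_le : s <= 2 * p + 1 by lia.
apply: leq_eta; first by rewrite card_ord; lia.
apply: (@compl_has_Kt_minor_fun_of_nat_pairs _ _ _ path_adj) => //.
- exact: path_adj_sym.
- by rewrite addn_gt0 s_gt0.
- exact: bag_lt.
- exact: bags_cover.
- exact: bags_disjoint.
- exact: bag_not_path_adj.
- exact: bags_not_path_complete.
Qed.

Lemma eta_compl_cycle_ge k p : 2 <= p -> 2 * p < k -> k <= 4 * p ->
  k - p <= eta (compl_rel (cycle_rel k)).
Proof.
move=> p_ge2 pk kp.
have [s k_eq] : exists s, k = s + 2 * p by exists (k - 2 * p); lia.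
subst k; have -> : s + 2 * p - p = s + p by lia.
have s_gt0 : 0 < s by lia.
have s_le : s <= 2 * p + 1 by lia.
apply: leq_eta; first by rewrite card_ord; lia.
apply: (@compl_has_Kt_minor_fun_of_nat_pairs _ _ _ (cycle_adj (s + 2 * p))) => //.
- exact: cycle_adj_sym.
- by rewrite addn_gt0 s_gt0.
- exact: bag_lt.
- exact: bags_cover.
- exact: bags_disjoint.
- exact: bag_not_cycle_adj.
- by move=> i j; apply: bags_not_cycle_complete; lia.
Qed.

Lemma eta_compl_cycle k :
  6 <= k -> eta (compl_rel (cycle_rel k)) = (k + k./2)./2.
Proof.
move=> k_ge6; apply/eqP; rewrite eqn_leq; apply/andP; split.
  have := eta_leq (compl_rel (cycle_rel k)); have := @omega_compl_cycle_le k.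
  by rewrite card_ord; lia.
have := @eta_compl_cycle_ge k ((k + 3) %/ 4); lia.
Qed.

Lemma eta_compl_path k :
  6 <= k -> eta (compl_rel (path_rel k)) = (k + k.+1./2)./2.
Proof.
move=> k_ge6; apply/eqP; rewrite eqn_leq; apply/andP; split.
  have := eta_leq (compl_rel (path_rel k)); have := omega_compl_path_le k.
  by rewrite card_ord; lia.
have := @eta_compl_path_ge k ((k + 2) %/ 4); lia.
Qed.

Theorem lemma9 (k : nat) : 6 <= k ->
  [/\ eta (compl_rel (cycle_rel k)) = (k + omega (compl_rel (cycle_rel k)))./2,
      eta (compl_rel (path_rel k)) = (k + omega (compl_rel (path_rel k)))./2,
      eta (compl_rel (cycle_rel k)) = 3 * (k %/ 4) + nth 0 [:: 0; 0; 1; 2] (k %% 4)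
    & eta (compl_rel (path_rel k)) = 3 * (k %/ 4) + nth 0 [:: 0; 1; 1; 2] (k %% 4)].
Proof.
move=> k_ge6.
have := eta_leq (compl_rel (cycle_rel k)).
have := eta_leq (compl_rel (path_rel k)).
have := @omega_compl_cycle_le k; have := omega_compl_path_le k.
rewrite !card_ord eta_compl_cycle // eta_compl_path //.
have := ltn_pmod k (isT : 0 < 4); have := divn_eq k 4.
by case: (k %% 4) => [|[|[|[|r]]]] /=; split; lia.
Qed.
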